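(* Let $\mathcal{X}$ be a Polish space, $\mathcal{L}:\mathcal{X}\to[-\infty,\infty]$ measurable, $P\in\mathcal{P}(\mathcal{X})$, $D$ a pre-divergence such that $Q\mapsto D(Q\|P)$ is convex, and $c$ a cost function with $c(x,x)=0$ for all $x$. Suppose there exists $\epsilon>0$ such that $\mathcal{L}\in L^1(Q)$ for all $Q\in\mathcal{P}(\mathcal{X})$ with $D^c(Q\|P)\leq\epsilon$. Then $\mathcal{L}\in L^1(Q)$ for all $Q\in\mathcal{P}(\mathcal{X})$ with $D^c(Q\|P)<\infty$.
   Context: $\mathcal{P}(\mathcal{X})$ is the set of Borel probability measures on the Polish space $\mathcal{X}$. A pre-divergence is $D:\mathcal{P}(\mathcal{X})\times\mathcal{P}(\mathcal{X})\to[0,\infty]$ with $D(\mu\|\mu)=0$ for all $\mu$. A cost function is a lower semicontinuous $c:\mathcal{X}\times\mathcal{X}\to[0,\infty]$, with OT cost $C(\mu,\nu)=\inf\{\int c\,d\pi:\pi_1=\mu,\pi_2=\nu\}$. $D^c(\nu\|\mu)=\inf_{\eta\in\mathcal{P}(\mathcal{X})}\{D(\eta\|\mu)+C(\eta,\nu)\}$. *)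

From HB Require Import structures.
From mathcomp Require Import all_boot all_order all_algebra.
From mathcomp Require Import all_classical all_reals all_analysis.
From mathcomp Require Import measurable_realfun.
Set Implicit Arguments. Unset Strict Implicit. Unset Printing Implicit Defensive.
Import Order.TTheory GRing.Theory Num.Theory.
Import numFieldNormedType.Exports.
Local Open Scope classical_set_scope.
Local Open Scope ring_scope.
Local Open Scope ereal_scope.

Notation Borel X := (g_sigma_algebraType (@open X)).

(* A Polish space is presented as a complete (pseudo)metric space which is
   Hausdorff (so the pseudometric is a metric) and separable. *)
Definition polish_space (R : realType) (X : completePseudoMetricType R) : Prop :=
  hausdorff_space X /\ exists S : set X, countable S /\ dense S.

Definition coupling (R : realType) (X : ptopologicalType)
    (mu nu : probability (Borel X) R)
    (pi : probability (Borel X * Borel X)%type R) : Prop :=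
  (forall A : set (Borel X), measurable A -> pi (A `*` setT) = mu A) /\
  (forall B : set (Borel X), measurable B -> pi (setT `*` B) = nu B).

Definition OT_cost (R : realType) (X : ptopologicalType)
    (c : (Borel X * Borel X)%type -> \bar R) (mu nu : probability (Borel X) R)
    : \bar R :=
  ereal_inf [set \int[pi]_z c z | pi in coupling mu nu].

(* D is a pre-divergence on P(X) (D eta mu stands for D(eta || mu)). *)
Definition pre_divergence (R : realType) (X : ptopologicalType)
    (D : probability (Borel X) R -> probability (Borel X) R -> \bar R) : Prop :=
  (forall eta mu, 0 <= D eta mu) /\ (forall mu, D mu mu = 0).

Definition Dc (R : realType) (X : ptopologicalType)
    (D : probability (Borel X) R -> probability (Borel X) R -> \bar R)
    (c : (Borel X * Borel X)%type -> \bar R) (nu mu : probability (Borel X) R)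
    : \bar R :=
  ereal_inf [set D eta mu + OT_cost c eta nu | eta in [set: probability (Borel X) R]].

Definition convex_in_first (R : realType) (X : ptopologicalType)
    (D : probability (Borel X) R -> probability (Borel X) R -> \bar R)
    (P : probability (Borel X) R) : Prop :=
  forall (Q1 Q2 Q : probability (Borel X) R) (t : R),
    (0 <= t <= 1)%R ->
    (forall A : set (Borel X), measurable A ->
       Q A = t%:E * Q1 A + (1 - t)%:E * Q2 A) ->
    D Q P <= t%:E * D Q1 P + (1 - t)%:E * D Q2 P.

(* Take eta and a coupling pi of (eta, Q) with s := D(eta||P) + \int c dpi
   finite.  For 0 < t <= 1 the mixture Q_t := t Q + (1 - t) P is coupled to
   eta_t := t eta + (1 - t) P by t pi + (1 - t) (x |-> (x, x))_# P.  Convexity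
   of D(.||P), D(P||P) = 0 and c = 0 on the diagonal give D^c(Q_t||P) <= t s,
   which is at most eps for t small enough.  Hence L is Q_t-integrable, and so
   Q-integrable because t Q <= Q_t. *)

From HB Require Import structures.
From mathcomp Require Import all_boot all_order all_algebra.
From mathcomp Require Import all_classical all_reals all_analysis.
From mathcomp Require Import measurable_realfun.
Import Order.TTheory GRing.Theory Num.Theory.
Import numFieldNormedType.Exports HBNNSimple.
Local Open Scope classical_set_scope.
Local Open Scope ring_scope.
Local Open Scope ereal_scope.

(* The cost is not assumed measurable for the product sigma-algebra, so its
   integrals are only suprema over nonnegative simple minorants. *)
Section ge0_integral_nonmeasurable.
Context d (T : measurableType d) (R : realType) (mu : {measure set T -> \bar R}).

Lemma le_ge0_integralT (f g : T -> \bar R) : (forall x, 0 <= f x) ->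
  (forall x, f x <= g x) -> \int[mu]_x f x <= \int[mu]_x g x.
Proof.
move=> f0 fg; have g0 x : 0 <= g x by apply: le_trans (fg x).
rewrite !ge0_integralTE//; apply: ereal_sup_le => _ [h hf <-].
by exists h => // x; apply: le_trans (fg x).
Qed.

Lemma ge0_integralT_le_nnsfun (f : T -> \bar R) (M : \bar R) :
  (forall x, 0 <= f x) ->
  (forall h : {nnsfun T >-> R}, (forall x, (h x)%:E <= f x) ->
     \int[mu]_x (h x)%:E <= M) ->
  \int[mu]_x f x <= M.
Proof.
move=> f0 hM; rewrite ge0_integralTE//; apply: ge_ereal_sup => _ [h hf <-].
by rewrite -integralT_nnsfun; exact: hM.
Qed.

End ge0_integral_nonmeasurable.

Lemma ge0_integral_pushforward_le {d d'} {T1 : measurableType d}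
    {T2 : measurableType d'} {R : realType} (mu : {measure set T1 -> \bar R})
    (phi : {mfun T1 >-> T2}) {f : T2 -> \bar R} : (forall y, 0 <= f y) ->
  \int[pushforward mu phi]_y f y <= \int[mu]_x (f \o phi) x.
Proof.
move=> f0; apply: ge0_integralT_le_nnsfun => // h hf.
have mh : measurable_fun setT (fun y => (h y)%:E).
  by apply/measurable_EFinP; exact: measurable_funP.
rewrite ge0_integral_pushforward// ?preimage_setT; last by move=> y _; rewrite lee_fin.
by apply: le_ge0_integralT => x /=; rewrite ?lee_fin.
Qed.

Section mixture.
Context {d} {T : measurableType d} {R : realType} {t : R}.
Hypotheses (t0 : (0 <= t)%R) (t1 : (t <= 1)%R).

Let onem_ge0 : (0 <= 1 - t)%R. Proof. by rewrite subr_ge0. Qed.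

Definition mixture (m1 m2 : probability T R) : set T -> \bar R :=
  measure_add (mscale (NngNum t0) m1) (mscale (NngNum onem_ge0) m2).

Variables m1 m2 : probability T R.

HB.instance Definition _ := Measure.on (mixture m1 m2).

Lemma mixtureE A : mixture m1 m2 A = t%:E * m1 A + (1 - t)%:E * m2 A.
Proof. by rewrite /mixture measure_addE. Qed.

Let mixture_setT : mixture m1 m2 setT = 1.
Proof.
by rewrite mixtureE !probability_setT !mule1 -EFinD addrC subrK.
Qed.

HB.instance Definition _ :=
  Measure_isProbability.Build _ _ _ (mixture m1 m2) mixture_setT.

Lemma ge0_integral_mixture (f : T -> \bar R) : measurable_fun setT f ->
  (forall x, 0 <= f x) ->
  \int[mixture m1 m2]_x f x = t%:E * \int[m1]_x f x + (1 - t)%:E * \int[m2]_x f x.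
Proof.
by move=> mf f0; rewrite ge0_integral_measure_add// !ge0_integral_mscale.
Qed.

Lemma ge0_integral_mixture_le (f : T -> \bar R) : (forall x, 0 <= f x) ->
  \int[mixture m1 m2]_x f x <= t%:E * \int[m1]_x f x + (1 - t)%:E * \int[m2]_x f x.
Proof.
move=> f0; apply: ge0_integralT_le_nnsfun => // h hf.
have mh : measurable_fun setT (fun x => (h x)%:E).
  by apply/measurable_EFinP; exact: measurable_funP.
rewrite ge0_integral_mixture//; last by move=> x; rewrite lee_fin.
by apply: leeD; apply: lee_wpmul2l; rewrite ?lee_fin ?subr_ge0//;
  apply: le_ge0_integralT => // x; rewrite lee_fin.
Qed.

Lemma integrable_mixturel (f : T -> \bar R) : (0 < t)%R ->
  (mixture m1 m2).-integrable setT f -> m1.-integrable setT f.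
Proof.
move=> tgt0 /integrableP[mf intf]; apply/integrableP; split => //.
move: intf; rewrite ge0_integral_mixture//; last exact: measurableT_comp.
have m2f_ge0 : 0 <= (1 - t)%:E * \int[m2]_x `|f x|.
  by rewrite mule_ge0 ?lee_fin ?subr_ge0 ?integral_ge0.
move=> /(le_lt_trans (leeDl _ m2f_ge0)).
have tEgt0 : 0 < t%:E by rewrite lte_fin.
by rewrite -{1}(gt0_muley tEgt0) lte_pmul2l.
Qed.

End mixture.

Section couplings.
Context {R : realType} {X : ptopologicalType}.

Definition diag (x : Borel X) : (Borel X * Borel X)%type := (x, x).

Lemma measurable_diag : measurable_fun setT diag.
Proof. exact: measurable_fun_pair. Qed.

HB.instance Definition _ := isMeasurableFun.Build _ _ _ _ diag measurable_diag.

Lemma coupling_diag (P : probability (Borel X) R) :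
  coupling P P (distribution P diag).
Proof. by split=> A _; congr (P _); apply/seteqP; split=> x //= []. Qed.

Lemma integral_diag_eq0 (P : probability (Borel X) R)
    (c : (Borel X * Borel X)%type -> \bar R) :
  (forall z, 0 <= c z) -> (forall x, c (x, x) = 0) ->
  \int[distribution P diag]_z c z = 0.
Proof.
move=> c0 cdiag; apply/eqP; rewrite eq_le integral_ge0// andbT.
apply: le_trans (ge0_integral_pushforward_le P diag c0) _.
by rewrite (eq_integral (fun=> 0)) ?integral0// => x _; exact: cdiag.
Qed.

Lemma coupling_mixture (t : R) (t0 : (0 <= t)%R) (t1 : (t <= 1)%R)
    (mu1 mu2 nu1 nu2 : probability (Borel X) R)
    (pi1 pi2 : probability (Borel X * Borel X)%type R) :
  coupling mu1 nu1 pi1 -> coupling mu2 nu2 pi2 ->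
  coupling (mixture t0 t1 mu1 mu2) (mixture t0 t1 nu1 nu2)
           (mixture t0 t1 pi1 pi2).
Proof.
move=> [pi1l pi1r] [pi2l pi2r]; split=> A mA.
- by rewrite [LHS]mixtureE [RHS]mixtureE pi1l ?pi2l.
- by rewrite [LHS]mixtureE [RHS]mixtureE pi1r ?pi2r.
Qed.

End couplings.

Lemma exists_weight_mul_le {R : realType} (a eps : R) : (0 <= a)%R -> (0 < eps)%R ->
  exists t : R, [/\ (0 < t)%R, (t <= 1)%R & (t * a <= eps)%R].
Proof.
move=> a0 eps0; have ae0 : (0 < a + eps)%R by rewrite ltr_wpDl.
exists (eps / (a + eps))%R; split.
- by rewrite divr_gt0.
- by rewrite ler_pdivrMr// mul1r lerDr.
- rewrite mulrAC ler_pdivrMr//; apply: ler_wpM2l; first exact: ltW.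
  by rewrite lerDl ltW.
Qed.

Section transport_divergence.
Context {R : realType} {X : ptopologicalType}
  {D : probability (Borel X) R -> probability (Borel X) R -> \bar R}
  {c : (Borel X * Borel X)%type -> \bar R} {P : probability (Borel X) R}.
Hypotheses (preD : pre_divergence D) (c_ge0 : forall z, 0 <= c z).

Lemma Dc_lt_pinfty_coupling (Q : probability (Borel X) R) :
  Dc D c Q P < +oo ->
  exists eta pi, coupling eta Q pi /\ D eta P + \int[pi]_z c z < +oo.
Proof.
move=> /ereal_inf_lt[_ [eta _ <-]] DC_lt; exists eta.
have OT_ge0 : 0 <= OT_cost c eta Q.
  by apply: le_ereal_inf_tmp => _ [pi _ <-]; exact: integral_ge0.
have /andP[D_fin OT_fin] : (D eta P \is a fin_num) && (OT_cost c eta Q \is a fin_num).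
  by rewrite -fin_numD ge0_fin_numE// adde_ge0// preD.1.
move: OT_fin; rewrite ge0_fin_numE// => /ereal_inf_lt[_ [pi cpl <-] int_lt].
by exists pi; split=> //; rewrite lte_add_pinfty// ltey_eq D_fin.
Qed.

Lemma Dc_mixture_le {Q eta : probability (Borel X) R}
    { pi : probability (Borel X * Borel X)%type R}
    {t : R} (t0 : (0 <= t)%R) (t1 : (t <= 1)%R) :
  convex_in_first D P -> (forall x, c (x, x) = 0) -> coupling eta Q pi ->
  Dc D c (mixture t0 t1 Q P) P <= t%:E * (D eta P + \int[pi]_z c z).
Proof.
move=> Dconv cdiag cpl.
pose pi' := mixture t0 t1 pi (distribution P diag).
have cpl' : coupling (mixture t0 t1 eta P) (mixture t0 t1 Q P) pi'.
  exact: coupling_mixture cpl (coupling_diag P).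
apply: le_trans (ereal_inf_lbound _) _; first by exists (mixture t0 t1 eta P).
rewrite ge0_muleDr ?preD.1 ?integral_ge0//; apply: leeD.
- have := Dconv eta P (mixture t0 t1 eta P) t; rewrite t0 t1 preD.2 mule0 adde0.
  by apply=> // A _; exact: mixtureE.
- apply: le_trans (ereal_inf_lbound _) _; first by exists pi'.
  apply: le_trans (ge0_integral_mixture_le t0 t1 pi _ _ c_ge0) _.
  by rewrite integral_diag_eq0// mule0 adde0.
Qed.

End transport_divergence.

Theorem lemma4 (R : realType) (X : completePseudoMetricType R)
  (L : Borel X -> \bar R) (P : probability (Borel X) R)
  (D : probability (Borel X) R -> probability (Borel X) R -> \bar R)
  (c : (X * X)%type -> \bar R) :
  polish_space X ->
  measurable_fun setT L ->
  pre_divergence D ->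
  convex_in_first D P ->
  lower_semicontinuous c ->
  (forall z, 0 <= c z) ->
  (forall x : X, c (x, x) = 0) ->
  (exists eps : R, (0 < eps)%R /\
     forall Q : probability (Borel X) R,
       Dc D c Q P <= eps%:E -> Q.-integrable setT L) ->
  forall Q : probability (Borel X) R,
    Dc D c Q P < +oo -> Q.-integrable setT L.
Proof.
move=> _ _ preD Dconv _ c_ge0 cdiag [eps [eps_gt0 intL]] Q.
move=> /(Dc_lt_pinfty_coupling preD c_ge0)[eta [pi [cpl s_lt]]].
set s := D eta P + _ in s_lt.
have s_ge0 : 0 <= s by rewrite adde_ge0 ?preD.1 ?integral_ge0.
have [t [t_gt0 t1 ts_le]] := exists_weight_mul_le _ _ (fine_ge0 s_ge0) eps_gt0.
have t0 := ltW t_gt0.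
apply: (integrable_mixturel t0 t1 Q P _ t_gt0); apply: intL.
apply: le_trans (Dc_mixture_le preD c_ge0 t0 t1 Dconv cdiag cpl) _.
by move: ts_le; rewrite -lee_fin EFinM fineK// ge0_fin_numE.
Qed.
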